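(* Let $T\in\mathbb{B}(\mathscr{H})$ and let $x\in\mathscr{H}$ be a unit vector. Then \[ \left|\langle |T||T^*|x,x\rangle-\langle |T|x,x\rangle\langle |T^*|x,x\rangle\right|\le \||T|x\|\,\||T^*|x\|-|\langle Tx,x\rangle|^{2}. \]
   Context: $\mathbb{B}(\mathscr{H})$ is the algebra of bounded operators on a complex Hilbert space $\mathscr{H}$, and $|T|=(T^*T)^{1/2}$, $|T^*|=(TT^* )^{1/2}$. *)

From HB Require Import structures.
From mathcomp Require Import all_boot all_order all_algebra.
From mathcomp Require Import complex.
From mathcomp Require Import reals.
Set Implicit Arguments. Unset Strict Implicit. Unset Printing Implicit Defensive.
Import Order.TTheory GRing.Theory Num.Theory.
Local Open Scope ring_scope.

(* Complex Hilbert spaces over the complex numbers C = R[i], R : realType.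
   Inner product: linear in the first argument, conjugate-linear in the second. *)
Section Hilbert.
Variable R : realType.
Local Notation C := (complex R).
Variable V : lmodType C.
Variable ip : V -> V -> C.

Definition hnorm (u : V) : C := sqrtC (ip u u).

Definition is_inner_product : Prop :=
  [/\ (forall (a : C) (u v w : V), ip (a *: u + v) w = a * ip u w + ip v w),
      (forall u v : V, ip v u = (ip u v)^*),
      (forall u : V, 0 <= ip u u) &
      (forall u : V, ip u u = 0 -> u = 0)].

Definition is_complete : Prop :=
  forall u : nat -> V,
    (forall e : C, 0 < e -> exists N : nat, forall m n : nat,
        (N <= m)%N -> (N <= n)%N -> hnorm (u m - u n) < e) ->
    exists l : V, forall e : C, 0 < e -> exists N : nat, forall n : nat,
        (N <= n)%N -> hnorm (u n - l) < e.

Definition is_hilbert : Prop := is_inner_product /\ is_complete.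

Definition bounded_op (T : V -> V) : Prop :=
  (forall (a : C) (u v : V), T (a *: u + v) = a *: T u + T v) /\
  exists M : C, forall v : V, hnorm (T v) <= M * hnorm v.

Definition is_adjoint (T S : V -> V) : Prop :=
  bounded_op S /\ forall u v : V, ip (T u) v = ip u (S v).

Definition positive_op (A : V -> V) : Prop :=
  bounded_op A /\ forall v : V, 0 <= ip (A v) v.

Definition is_pos_sqrt (P A : V -> V) : Prop :=
  positive_op A /\ forall v : V, A (A v) = P v.
End Hilbert.

From HB Require Import structures.
From mathcomp Require Import all_boot all_order all_algebra.
From mathcomp Require Import complex.
From mathcomp Require Import reals classical_sets.
From mathcomp Require Import ring lra.
Import Order.TTheory GRing.Theory Num.Theory.
Set Implicit Arguments. Unset Strict Implicit. Unset Printing Implicit Defensive.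
Local Open Scope ring_scope.

(* Write A = |T|, B = |T^*|, a = <Ax,x> and b = <Bx,x>.  As A is self-adjoint,
   <ABx,x> - ab = <(B - b)x, (A - a)x>, so Cauchy-Schwarz and Pythagoras bound
   its modulus by sqrt ((|Ax|^2 - a^2) (|Bx|^2 - b^2)) <= |Ax| |Bx| - ab.
   It remains to show the mixed Schwarz inequality |<Tx,x>|^2 <= ab.  It
   follows from the positivity of the operator matrix [[A, T^*], [T, B]] on
   H x H, which is Z + N with Z = diag(A, B) positive, N = [[0, T^*], [T, 0]]
   self-adjoint and Z^2 = N^2.  Positivity of Z + N needs no spectral theory:
   if the numerical range of Z + N had a negative infimum m, then m would be an
   approximate eigenvalue, Zp ~ mp - Np for some unit vectors p, and
   |Zp| = |Np| together with <Zp,p> >= 0 would force m^2 <= 0. *)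

Local Notation Re := complex.Re.
Local Notation Im := complex.Im.
Local Notation "x %:C" := (real_complex _ x) (format "x %:C").

Section RealInequalities.
Variable R : realType.

Lemma quadratic_ge0_le (a b n : R) : 0 <= n -> 0 <= b ->
  (forall s, 0 <= a + 2 * s * n + s ^+ 2 * n * b) -> n <= a * b.
Proof.
move=> n_ge0 b_ge0 quad_ge0; have a_ge0 : 0 <= a by have := quad_ge0 0; lra.
have [->|n_neq0] := eqVneq n 0; first exact: mulr_ge0.
have n_gt0 : 0 < n by rewrite lt_def n_neq0.
have [b0|b_neq0] := eqVneq b 0.
  have := quad_ge0 (- (a + 1) / (2 * n)); rewrite b0 mulr0 addr0.
  have -> : 2 * (- (a + 1) / (2 * n)) * n = - (a + 1) by field; rewrite gt_eqF.
  lra.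
have b_gt0 : 0 < b by rewrite lt_def b_neq0.
have := quad_ge0 (- b^-1).
have -> : (- b^-1) ^+ 2 * n * b = n / b by field.
have -> : 2 * - b^-1 * n = - (2 * (n / b)) by ring.
by rewrite -ler_pdivrMr // => ?; lra.
Qed.

Lemma sqrt_mul_sub_le (a b p q : R) : 0 <= a -> 0 <= b ->
  a ^+ 2 <= p -> b ^+ 2 <= q ->
  Num.sqrt ((p - a ^+ 2) * (q - b ^+ 2)) <= Num.sqrt p * Num.sqrt q - a * b.
Proof.
move=> a_ge0 b_ge0 ap bq.
have p_ge0 : 0 <= p by apply: le_trans ap; exact: sqr_ge0.
have q_ge0 : 0 <= q by apply: le_trans bq; exact: sqr_ge0.
have le_sqrt c d : 0 <= c -> c ^+ 2 <= d -> c <= Num.sqrt d.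
  move=> c_ge0 cd; rewrite -(ger0_norm c_ge0) -sqrtr_sqr ler_sqrt //.
  by apply: le_trans cd; exact: sqr_ge0.
have ab_le : a * b <= Num.sqrt p * Num.sqrt q.
  by apply: ler_pM; rewrite ?le_sqrt.
rewrite -[leRHS]ger0_norm ?subr_ge0 // -sqrtr_sqr ler_sqrt ?sqr_ge0 //.
rewrite -{1}(sqr_sqrtr p_ge0) -{1}(sqr_sqrtr q_ge0) -subr_ge0.
set α := Num.sqrt p; set β := Num.sqrt q.
have -> : (α * β - a * b) ^+ 2 - (α ^+ 2 - a ^+ 2) * (β ^+ 2 - b ^+ 2)
    = (α * b - a * β) ^+ 2 by ring.
exact: sqr_ge0.
Qed.

End RealInequalities.

Section SquaredModulus.
Variable R : realType.
Local Notation C := R[i].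

Definition sqmod (z : C) : R := Re z ^+ 2 + Im z ^+ 2.

Lemma sqmod_ge0 z : 0 <= sqmod z.
Proof. by rewrite addr_ge0 ?sqr_ge0. Qed.

Lemma sqr_normc z : `|z| ^+ 2 = (sqmod z)%:C.
Proof. by rewrite -add_Re2_Im2. Qed.

Lemma mulcJ_sqmod z : z * z^* = (sqmod z)%:C.
Proof. by rewrite -normCK sqr_normc. Qed.

Lemma sqmod_real (a : R) : sqmod a%:C = a ^+ 2.
Proof. by rewrite /sqmod /= expr0n addr0. Qed.

Lemma sqmod_realM (s : R) z : sqmod (s%:C * z) = s ^+ 2 * sqmod z.
Proof. by case: z => a b; rewrite /sqmod /=; ring. Qed.

Lemma Re_realM (s : R) z : Re (s%:C * z) = s * Re z.
Proof. by case: z => a b /=; ring. Qed.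

Lemma Re_conj_realM (s : R) z : Re ((s%:C * z)^* * z) = s * sqmod z.
Proof. by case: z => a b; rewrite /sqmod /=; ring. Qed.

Lemma conjC_realc (s : R) : (s%:C)^* = s%:C.
Proof. by rewrite conj_Creal // complex_real. Qed.

Lemma Re_ge0 (z : C) : 0 <= z -> 0 <= Re z.
Proof. by rewrite lecE => /andP[]. Qed.

Lemma sqrtC_realc (r : R) : 0 <= r -> sqrtC r%:C = (Num.sqrt r)%:C.
Proof.
move=> r_ge0; rewrite -{1}(sqr_sqrtr r_ge0) rmorphXn sqrCK //.
by rewrite ler0c sqrtr_ge0.
Qed.

End SquaredModulus.

Section LinearMaps.
Variables (F : comNzRingType) (U : lmodType F).

Lemma linear_add (A B : U -> U) :
  linear A -> linear B -> linear (fun u => A u + B u).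
Proof. by move=> A_lin B_lin a u v; rewrite A_lin B_lin scalerDr addrACA. Qed.

Lemma linear_sub_scale (A : U -> U) (c : F) :
  linear A -> linear (fun u => A u - c *: u).
Proof.
move=> A_lin a u v; rewrite A_lin scalerDr scalerBr !scalerA mulrC.
by rewrite opprD addrACA.
Qed.

End LinearMaps.

Section InnerProduct.
Variable R : realType.
Local Notation C := R[i].
Variables (V : lmodType C) (ip : V -> V -> C).
Hypothesis ip_linear : forall (a : C) (u v w : V),
  ip (a *: u + v) w = a * ip u w + ip v w.
Hypothesis ip_conj : forall u v, ip v u = (ip u v)^*.
Hypothesis ip_ge0 : forall u, 0 <= ip u u.

Lemma ip0l w : ip 0 w = 0.
Proof.
have := ip_linear 1 0 0 w; rewrite scale1r addr0 mul1r => ip0_double.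
by apply: (addrI (ip 0 w)); rewrite addr0 -ip0_double.
Qed.

Lemma ipDl u v w : ip (u + v) w = ip u w + ip v w.
Proof. by have := ip_linear 1 u v w; rewrite scale1r mul1r. Qed.

Lemma ipZl a u w : ip (a *: u) w = a * ip u w.
Proof. by have := ip_linear a u 0 w; rewrite !addr0 ip0l addr0. Qed.

Lemma ipNl u w : ip (- u) w = - ip u w.
Proof. by rewrite -scaleN1r ipZl mulN1r. Qed.

Lemma ipBl u v w : ip (u - v) w = ip u w - ip v w.
Proof. by rewrite ipDl ipNl. Qed.

Lemma ipDr u v w : ip w (u + v) = ip w u + ip w v.
Proof. by rewrite !(ip_conj _ w) ipDl rmorphD. Qed.

Lemma ipZr a u w : ip w (a *: u) = a^* * ip w u.
Proof. by rewrite !(ip_conj _ w) ipZl rmorphM. Qed.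

Lemma ipBr u v w : ip w (u - v) = ip w u - ip w v.
Proof. by rewrite !(ip_conj _ w) ipBl rmorphB. Qed.

Lemma Re_ipC u v : Re (ip v u) = Re (ip u v).
Proof. by rewrite ip_conj; case: (ip u v). Qed.

Definition sqnorm u := Re (ip u u).

Lemma ip_sqnorm u : ip u u = (sqnorm u)%:C.
Proof. by rewrite RRe_real // ger0_real. Qed.

Lemma sqnorm_ge0 u : 0 <= sqnorm u.
Proof. exact: Re_ge0. Qed.

Lemma sqnormD u v : sqnorm (u + v) = sqnorm u + sqnorm v + 2 * Re (ip u v).
Proof. by rewrite /sqnorm ipDl !ipDr !raddfD /= (Re_ipC u v); ring. Qed.

Lemma sqnormB u v : sqnorm (u - v) = sqnorm u + sqnorm v - 2 * Re (ip u v).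
Proof. by rewrite /sqnorm ipBl !ipBr !raddfB /= (Re_ipC u v); ring. Qed.

Lemma sqnormZ c u : sqnorm (c *: u) = sqmod c * sqnorm u.
Proof. by rewrite /sqnorm ipZl ipZr mulrA mulcJ_sqmod Re_realM. Qed.

Lemma Re_ip_realZl (s : R) u v : Re (ip (s%:C *: u) v) = s * Re (ip u v).
Proof. by rewrite ipZl Re_realM. Qed.

Lemma Re_ip_realZr (s : R) u v : Re (ip u (s%:C *: v)) = s * Re (ip u v).
Proof. by rewrite ipZr conjC_realc Re_realM. Qed.

Lemma Re_ip_le (s : R) u v :
  2 * s * Re (ip u v) <= s ^+ 2 * sqnorm u + sqnorm v.
Proof.
have := sqnorm_ge0 (s%:C *: u - v).
by rewrite sqnormB sqnormZ sqmod_real Re_ip_realZl; lra.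
Qed.

Lemma normr_Re_ip_le (s : R) u v : 0 < s ->
  `|2 * Re (ip u v)| <= s * sqnorm u + sqnorm v / s.
Proof.
move=> s_gt0; have := Re_ip_le s u v; have := Re_ip_le (- s) u v.
have [t ->] : exists t, sqnorm v = s * t.
  by exists (sqnorm v / s); field; rewrite gt_eqF.
rewrite [s * t]mulrC mulfK ?gt_eqF // ler_norml => ? ?; apply/andP; split; nra.
Qed.

Lemma sqnormD_le u v : sqnorm (u + v) <= 2 * (sqnorm u + sqnorm v).
Proof.
have := normr_Re_ip_le u v ltr01; rewrite mul1r divr1 sqnormD ler_norml.
by case/andP; lra.
Qed.

Lemma sqmod_ip_le u v : sqmod (ip u v) <= sqnorm u * sqnorm v.
Proof.
apply: quadratic_ge0_le (sqmod_ge0 _) (sqnorm_ge0 v) _ => s.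
have := sqnorm_ge0 (u + (s%:C * ip u v) *: v).
by rewrite sqnormD sqnormZ sqmod_realM ipZr Re_conj_realM; lra.
Qed.

Lemma sqnorm_sub_proj u x : sqnorm x = 1 ->
  sqnorm (u - ip u x *: x) = sqnorm u - sqmod (ip u x).
Proof.
move=> x_unit; rewrite sqnormB sqnormZ x_unit ipZr [_^* * _]mulrC mulcJ_sqmod.
by rewrite /=; lra.
Qed.

Definition selfadjoint (A : V -> V) := forall u v, ip (A u) v = ip u (A v).

Lemma adjoint_sym (A B : V -> V) : (forall u v, ip (A u) v = ip u (B v)) ->
  forall u v, ip (B u) v = ip u (A v).
Proof. by move=> adj u v; rewrite ip_conj -adj -ip_conj. Qed.

Lemma ip_mul_sub_mul (A B : V -> V) x : selfadjoint A -> sqnorm x = 1 ->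
  ip (A (B x)) x - ip (A x) x * ip (B x) x
    = ip (B x - ip (B x) x *: x) (A x - ip (A x) x *: x).
Proof.
move=> A_sa x_unit; have x1 : ip x x = 1 by rewrite ip_sqnorm x_unit.
by rewrite ipBl !ipBr !ipZl !ipZr -ip_conj x1 -!A_sa; ring.
Qed.

Lemma sqrt_sqmod_covariance_le (A B : V -> V) x :
  selfadjoint A -> 0 <= ip (A x) x -> 0 <= ip (B x) x -> sqnorm x = 1 ->
  Num.sqrt (sqmod (ip (A (B x)) x - ip (A x) x * ip (B x) x))
    <= Num.sqrt (sqnorm (A x)) * Num.sqrt (sqnorm (B x))
       - Re (ip (A x) x) * Re (ip (B x) x).
Proof.
move=> A_sa Ax_ge0 Bx_ge0 x_unit; rewrite ip_mul_sub_mul //.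
have [a_ge0 b_ge0] := (Re_ge0 Ax_ge0, Re_ge0 Bx_ge0).
set a := Re (ip (A x) x) in a_ge0 *; set b := Re (ip (B x) x) in b_ge0 *.
have Ax_x : ip (A x) x = a%:C by rewrite RRe_real // ger0_real.
have Bx_x : ip (B x) x = b%:C by rewrite RRe_real // ger0_real.
have varA := sqnorm_sub_proj (A x) x_unit.
have varB := sqnorm_sub_proj (B x) x_unit.
rewrite Ax_x sqmod_real in varA; rewrite Bx_x sqmod_real in varB.
apply: le_trans (sqrt_mul_sub_le a_ge0 b_ge0 _ _); last 2 first.
- by rewrite -subr_ge0 -varA sqnorm_ge0.
- by rewrite -subr_ge0 -varB sqnorm_ge0.
rewrite Ax_x Bx_x -varA -varB ler_sqrt ?mulr_ge0 ?sqnorm_ge0 //.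
by rewrite mulrC sqmod_ip_le.
Qed.

Section Positive.
Variable A : V -> V.
Hypothesis A_lin : linear A.
HB.instance Definition _ := GRing.isLinear.Build C V V *:%R A A_lin.
Hypothesis A_ge0 : forall u, 0 <= ip (A u) u.

(* Polarization: the defect d u v := <Au,v> - <u,Av> vanishes on the diagonal
   and is sesquilinear, so testing u + v and u + 'i v kills it everywhere. *)
Lemma positive_selfadjoint : selfadjoint A.
Proof.
pose d u v := ip (A u) v - ip u (A v).
have d_diag v : d v v = 0.
  by rewrite /d (ip_conj (A v)) conj_Creal ?subrr // ger0_real.
have d_polar c u v : d (u + c *: v) (u + c *: v) = c^* * d u v + c * d v u.
  rewrite /d linearD linearZ !ipDl !ipDr !ipZl !ipZr.
  by move: (d_diag u) (d_diag v); rewrite /d => /subr0_eq -> /subr0_eq ->; ring.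
move=> u v; apply/eqP; rewrite -subr_eq0 -/(d u v).
have sym : d u v + d v u = 0.
  by move: (d_polar 1 u v); rewrite d_diag conjC1 !mul1r => <-.
have asym : 'i * (d v u - d u v) = 0.
  by move: (d_polar 'i u v); rewrite d_diag conjCi => /esym <-; ring.
move/eqP: asym; rewrite mulf_eq0 (negPf (neq0Ci _)) subr_eq0 => /eqP dvu.
by move: sym; rewrite dvu -mulr2n => /eqP; rewrite mulrn_eq0.
Qed.

End Positive.

Section PositiveForm.
Variable P : V -> V.
Hypothesis P_lin : linear P.
HB.instance Definition _ := GRing.isLinear.Build C V V *:%R P P_lin.
Hypothesis P_sa : selfadjoint P.
Variable L : R.
Hypothesis L_ge0 : 0 <= L.
Hypothesis P_ge0 : forall u, 0 <= Re (ip (P u) u).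
Hypothesis P_le : forall u, Re (ip (P u) u) <= L * sqnorm u.

(* Cauchy-Schwarz for the positive form <P., .>, applied to u and Pu. *)
Lemma sqnorm_le_Re_ip u : sqnorm (P u) <= Re (ip (P u) u) * L.
Proof.
have expand s w : Re (ip (P (u + s%:C *: w)) (u + s%:C *: w))
    = Re (ip (P u) u) + 2 * s * Re (ip (P u) w) + s ^+ 2 * Re (ip (P w) w).
  rewrite linearD linearZ ipDl !ipDr !raddfD /= !Re_ip_realZl !Re_ip_realZr.
  by rewrite (P_sa w u) (Re_ipC (P u) w); ring.
apply: quadratic_ge0_le (sqnorm_ge0 _) L_ge0 _ => s.
have := P_ge0 (u + s%:C *: P u); rewrite expand -/(sqnorm (P u)).
have := P_le (P u); have := sqr_ge0 s; nra.
Qed.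

End PositiveForm.

Section NumericalRange.
Variable W : V -> V.
Hypothesis W_lin : linear W.
Hypothesis W_sa : selfadjoint W.
Variable K : R.
Hypothesis K_ge0 : 0 <= K.
Hypothesis W_bounded : forall u, sqnorm (W u) <= K * sqnorm u.

Lemma normr_Re_ip_bounded u : `|2 * Re (ip (W u) u)| <= (K + 1) * sqnorm u.
Proof.
apply: le_trans (normr_Re_ip_le (W u) u ltr01) _; rewrite mul1r divr1.
by have := W_bounded u; lra.
Qed.

Lemma numerical_range_inf : (exists p, Re (ip (W p) p) < 0) ->
  exists2 m : R, m < 0 &
    (forall u, m * sqnorm u <= Re (ip (W u) u)) /\
    (forall e, 0 < e ->
       exists2 u, 0 < sqnorm u & Re (ip (W u) u) < (m + e) * sqnorm u).
Proof.
move=> [p0 Wp0_lt0].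
have Re_ip_eq0 u : sqnorm u = 0 -> Re (ip (W u) u) = 0.
  move=> u0; have := normr_Re_ip_bounded u.
  by rewrite u0 mulr0 normr_le0 mulf_eq0 pnatr_eq0 => /eqP.
have p0_gt0 : 0 < sqnorm p0.
  rewrite lt_def sqnorm_ge0 andbT; apply/eqP => /Re_ip_eq0 p00; lra.
pose E : set R :=
  fun x => exists2 u, 0 < sqnorm u & x = - Re (ip (W u) u) / sqnorm u.
have E_sup : has_sup E.
  split; first by exists (- Re (ip (W p0) p0) / sqnorm p0), p0.
  exists ((K + 1) / 2) => _ [u u_gt0 ->]; rewrite ler_pdivrMr //.
  by move: (normr_Re_ip_bounded u); rewrite ler_norml => /andP[? _]; lra.
have E_le u : 0 < sqnorm u -> - Re (ip (W u) u) / sqnorm u <= sup E.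
  by move=> u_gt0; apply: sup_upper_bound => //; exists u.
exists (- sup E); last split.
- have := E_le _ p0_gt0; rewrite oppr_lt0; apply: lt_le_trans.
  by rewrite divr_gt0 // oppr_gt0.
- move=> u; have [u0|u_neq0] := eqVneq (sqnorm u) 0.
    by rewrite u0 Re_ip_eq0 ?mulr0.
  have u_gt0 : 0 < sqnorm u by rewrite lt_def u_neq0 sqnorm_ge0.
  by have := E_le _ u_gt0; rewrite ler_pdivrMr //; lra.
- move=> e e_gt0; have [_ [u u_gt0 ->]] := sup_adherent e_gt0 E_sup.
  by rewrite ltr_pdivlMr // => ?; exists u => //; lra.
Qed.

Lemma approx_eigenvalue : (exists p, Re (ip (W p) p) < 0) ->
  exists2 m : R, m < 0 & forall e, 0 < e ->
    exists2 u, 0 < sqnorm u & sqnorm (W u - m%:C *: u) <= e * sqnorm u.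
Proof.
move=> /numerical_range_inf [m m_lt0 [m_le m_approx]].
have Re_shift u : Re (ip (W u - m%:C *: u) u) = Re (ip (W u) u) - m * sqnorm u.
  by rewrite ipBl raddfB /= Re_ip_realZl.
set L := K + 1 - m.
have L_gt0 : 0 < L by rewrite /L; have := K_ge0; lra.
have shift_le u : sqnorm (W u - m%:C *: u) <= Re (ip (W u - m%:C *: u) u) * L.
  apply: (sqnorm_le_Re_ip (P := fun u => W u - m%:C *: u)).
  - exact: linear_sub_scale.
  - by move=> v w; rewrite ipBl ipBr ipZl ipZr conjC_realc W_sa.
  - exact: ltW.
  - by move=> v; rewrite Re_shift subr_ge0.
  - move=> v; rewrite Re_shift; have := normr_Re_ip_bounded v.
    have := sqnorm_ge0 v; have := mulr_ge0 K_ge0 (sqnorm_ge0 v).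
    by rewrite ler_norml /L => ? ? /andP[_ ?]; lra.
exists m => // e e_gt0.
have [u u_gt0 fu_lt] := m_approx (e / L) (divr_gt0 e_gt0 L_gt0).
exists u => //; apply: le_trans (shift_le u) _.
by rewrite Re_shift -ler_pdivlMr // mulrAC; apply: ltW; lra.
Qed.

End NumericalRange.

Section SquareRoot.
Variables Z N : V -> V.
Hypotheses (Z_lin : linear Z) (N_lin : linear N).
Hypothesis Z_ge0 : forall u, 0 <= ip (Z u) u.
Hypothesis N_sa : selfadjoint N.
Hypothesis ZZ_NN : forall u, Z (Z u) = N (N u).
Variable K : R.
Hypothesis K_ge0 : 0 <= K.
Hypothesis N_bounded : forall u, sqnorm (N u) <= K * sqnorm u.

Let Z_sa : selfadjoint Z := positive_selfadjoint Z_lin Z_ge0.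

Lemma sqnorm_sqrt_eq u : sqnorm (Z u) = sqnorm (N u).
Proof. by rewrite /sqnorm -Z_sa ZZ_NN N_sa. Qed.

(* Expand |Zu|^2 = |Nu|^2 with Zu = mu + e - Nu, and use m <Zu,u> <= 0. *)
Lemma sqr_le_defect (m : R) u : m <= 0 ->
  m ^+ 2 * sqnorm u
    <= sqnorm (Z u + N u - m%:C *: u)
       - 2 * Re (ip (Z u + N u - m%:C *: u) (N u)).
Proof.
move=> m_le0; set e := Z u + N u - m%:C *: u.
have Zu : Z u = e + m%:C *: u - N u by rewrite /e subrK addrK.
have := sqnorm_sqrt_eq u; have := Re_ge0 (Z_ge0 u); rewrite Zu.
rewrite sqnormB sqnormD sqnormZ sqmod_real ipBl ipDl !raddfB !raddfD /=.
rewrite ipDl raddfD /= !Re_ip_realZl !Re_ip_realZr -/(sqnorm u).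
by rewrite (Re_ipC u (N u)); nra.
Qed.

Lemma sqr_le_defect_bound (m s : R) u : m <= 0 -> 0 < s ->
  m ^+ 2 * sqnorm u
    <= (1 + s) * sqnorm (Z u + N u - m%:C *: u) + K / s * sqnorm u.
Proof.
move=> m_le0 s_gt0; set e := Z u + N u - m%:C *: u.
have := normr_Re_ip_le e (N u) s_gt0; rewrite ler_norml => /andP[+ _].
have : sqnorm (N u) / s <= K / s * sqnorm u.
  by rewrite mulrAC ler_pM2r ?invr_gt0.
have := sqr_le_defect u m_le0; rewrite -/e; lra.
Qed.

Lemma Re_ip_add_ge0 u : 0 <= Re (ip (Z u + N u) u).
Proof.
rewrite leNgt; apply/negP => neg.
have W_sa : selfadjoint (fun v => Z v + N v).
  by move=> v w; rewrite ipDl ipDr Z_sa N_sa.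
have W_bounded v : sqnorm (Z v + N v) <= 4 * K * sqnorm v.
  apply: le_trans (sqnormD_le _ _) _; rewrite sqnorm_sqrt_eq.
  by have := N_bounded v; lra.
have [m m_lt0 approx] := approx_eigenvalue (linear_add Z_lin N_lin) W_sa
  (mulr_ge0 (ler0n _ 4) K_ge0) W_bounded (ex_intro _ u neg).
suff : m ^+ 2 <= 0 by rewrite leNgt exprn_even_gt0 ?(ltr0_neq0 m_lt0).
apply/ler_addgt0Pr => eps eps_gt0; rewrite add0r.
set s := 2 * K / eps + 1.
have s_gt0 : 0 < s.
  have := divr_ge0 (mulr_ge0 (ler0n _ 2) K_ge0) (ltW eps_gt0).
  by rewrite /s; lra.
have Ks_le : K / s <= eps / 2.
  rewrite ler_pdivrMr // (_ : eps / 2 * s = K + eps / 2); first lra.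
  by rewrite /s; field; rewrite gt_eqF.
have delta_gt0 : 0 < eps / (2 * (1 + s)).
  by apply: divr_gt0 => //; apply: mulr_gt0; lra.
have [v v_gt0 v_approx] := approx _ delta_gt0.
have := sqr_le_defect_bound v (ltW m_lt0) s_gt0.
have : (1 + s) * sqnorm (Z v + N v - m%:C *: v) <= eps / 2 * sqnorm v.
  apply: le_trans (ler_wpM2l _ v_approx) _; first by rewrite addr_ge0 ?ltW.
  rewrite mulrA (_ : (1 + s) * (eps / (2 * (1 + s))) = eps / 2) //.
  by field; rewrite gt_eqF //; lra.
have : K / s * sqnorm v <= eps / 2 * sqnorm v by rewrite ler_wpM2r ?sqnorm_ge0.
by move=> ? ? ?; rewrite -(ler_pM2r v_gt0); lra.
Qed.

End SquareRoot.

End InnerProduct.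

Section BlockOperator.
Variable R : realType.
Local Notation C := R[i].
Variables (V : lmodType C) (ip : V -> V -> C).
Hypothesis ip_linear : forall (a : C) (u v w : V),
  ip (a *: u + v) w = a * ip u w + ip v w.
Hypothesis ip_conj : forall u v, ip v u = (ip u v)^*.
Hypothesis ip_ge0 : forall u, 0 <= ip u u.

Definition ip_pair (p q : V * V) : C := ip p.1 q.1 + ip p.2 q.2.

Lemma ip_pair_linear a (p q r : V * V) :
  ip_pair (a *: p + q) r = a * ip_pair p r + ip_pair q r.
Proof. by rewrite /ip_pair /= !ip_linear; ring. Qed.

Lemma ip_pair_conj (p q : V * V) : ip_pair q p = (ip_pair p q)^*.
Proof. by rewrite /ip_pair (ip_conj p.1) (ip_conj p.2) rmorphD. Qed.

Lemma ip_pair_ge0 (p : V * V) : 0 <= ip_pair p p.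
Proof. exact: addr_ge0 (ip_ge0 _) (ip_ge0 _). Qed.

Lemma sqnorm_pair (p : V * V) :
  sqnorm ip_pair p = sqnorm ip p.1 + sqnorm ip p.2.
Proof. exact: raddfD. Qed.

Variables T Tstar A B : V -> V.
Hypotheses (T_lin : linear T) (Tstar_lin : linear Tstar).
Hypotheses (A_lin : linear A) (B_lin : linear B).
HB.instance Definition _ := GRing.isLinear.Build C V V *:%R B B_lin.
Hypothesis T_adj : forall u v, ip (T u) v = ip u (Tstar v).
Hypothesis A_ge0 : forall u, 0 <= ip (A u) u.
Hypothesis B_ge0 : forall u, 0 <= ip (B u) u.
Hypothesis AA : forall u, A (A u) = Tstar (T u).
Hypothesis BB : forall u, B (B u) = T (Tstar u).
Variables KT KTstar : R.
Hypotheses (KT_ge0 : 0 <= KT) (KTstar_ge0 : 0 <= KTstar).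
Hypothesis T_bounded : forall u, sqnorm ip (T u) <= KT * sqnorm ip u.
Hypothesis Tstar_bounded :
  forall u, sqnorm ip (Tstar u) <= KTstar * sqnorm ip u.

Lemma block_positive x y :
  0 <= Re (ip (A x) x) + Re (ip (B y) y) + 2 * Re (ip (T x) y).
Proof.
pose Z (p : V * V) := (A p.1, B p.2).
pose N (p : V * V) := (Tstar p.2, T p.1).
have Z_lin : linear Z by move=> a p q; rewrite /Z /= A_lin B_lin.
have N_lin : linear N by move=> a p q; rewrite /N /= T_lin Tstar_lin.
have Z_ge0 p : 0 <= ip_pair (Z p) p by exact: addr_ge0 (A_ge0 _) (B_ge0 _).
have N_sa : selfadjoint ip_pair N.
  by move=> p q; rewrite /ip_pair /= T_adj (adjoint_sym ip_conj T_adj) addrC.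
have ZZ_NN p : Z (Z p) = N (N p) by rewrite /Z /N /= AA BB.
have N_bounded p : sqnorm ip_pair (N p)
    <= (KT + KTstar) * sqnorm ip_pair p.
  rewrite !sqnorm_pair /=; have := T_bounded p.1; have := Tstar_bounded p.2.
  have := sqnorm_ge0 ip_ge0 p.1; have := sqnorm_ge0 ip_ge0 p.2.
  by have := KT_ge0; have := KTstar_ge0; nra.
have := Re_ip_add_ge0 ip_pair_linear ip_pair_conj ip_pair_ge0 Z_lin N_lin Z_ge0
  N_sa ZZ_NN (addr_ge0 KT_ge0 KTstar_ge0) N_bounded (x, y).
rewrite /ip_pair /= !(ipDl ip_linear) !raddfD /= (adjoint_sym ip_conj T_adj).
by rewrite (Re_ipC ip_conj (T x)); lra.
Qed.

Lemma mixed_schwarz x y :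
  sqmod (ip (T x) y) <= Re (ip (A x) x) * Re (ip (B y) y).
Proof.
apply: quadratic_ge0_le (sqmod_ge0 _) (Re_ge0 (B_ge0 y)) _ => s.
have := block_positive x ((s%:C * ip (T x) y) *: y).
rewrite linearZ (ipZl ip_linear) !(ipZr ip_linear ip_conj) mulrA mulcJ_sqmod.
by rewrite Re_realM sqmod_realM Re_conj_realM; lra.
Qed.

End BlockOperator.

Section HilbertNorm.
Variable R : realType.
Variables (V : lmodType R[i]) (ip : V -> V -> R[i]).
Hypothesis ip_ge0 : forall u, 0 <= ip u u.

Lemma hnormE u : hnorm ip u = (Num.sqrt (sqnorm ip u))%:C.
Proof. by rewrite /hnorm (ip_sqnorm ip_ge0) sqrtC_realc // sqnorm_ge0. Qed.

Lemma sqnorm_eq1_of_hnorm u : hnorm ip u = 1 -> sqnorm ip u = 1.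
Proof.
rewrite hnormE -[1]/(1%:C) => /complexI sqrt_eq1.
by rewrite -(sqr_sqrtr (sqnorm_ge0 ip_ge0 u)) sqrt_eq1 expr1n.
Qed.

Lemma sqnorm_bounded_of_hnorm (T : V -> V) :
  (exists M, forall v, hnorm ip (T v) <= M * hnorm ip v) ->
  exists2 K : R, 0 <= K & forall v, sqnorm ip (T v) <= K * sqnorm ip v.
Proof.
move=> [M T_le]; set mu := Re `|M|.
exists (mu ^+ 2) => [|v]; first exact: sqr_ge0.
have := T_le v; rewrite !hnormE.
set a := Num.sqrt _; set b := Num.sqrt _ => a_le.
have a_le_mub : a <= mu * b.
  have Mb_ge0 : 0 <= M * b%:C by apply: le_trans a_le; rewrite ler0c sqrtr_ge0.
  have b_ge0 : 0 <= b%:C by rewrite ler0c sqrtr_ge0.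
  have : a%:C <= `|M| * b%:C by rewrite -(ger0_norm b_ge0) -normrM ger0_norm.
  by rewrite -[`|M|]RRe_real ?normr_real // -rmorphM lecR.
have := ler_pM (sqrtr_ge0 _) (sqrtr_ge0 _) a_le_mub a_le_mub.
by rewrite -!expr2 /a sqr_sqrtr ?sqnorm_ge0 // exprMn /b sqr_sqrtr ?sqnorm_ge0.
Qed.

End HilbertNorm.

Theorem theorem4p1 (R : realType) (V : lmodType (complex R))
  (ip : V -> V -> complex R) (HV : is_hilbert ip)
  (T Tstar absT absTstar : V -> V)
  (HT : bounded_op ip T) (HTstar : is_adjoint ip T Tstar)
  (HabsT : is_pos_sqrt ip (fun v => Tstar (T v)) absT)
  (HabsTstar : is_pos_sqrt ip (fun v => T (Tstar v)) absTstar)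
  (x : V) (hx : hnorm ip x = 1) :
  `| ip (absT (absTstar x)) x - ip (absT x) x * ip (absTstar x) x |
    <= hnorm ip (absT x) * hnorm ip (absTstar x) - `| ip (T x) x | ^+ 2.
Proof.
have [[ip_lin ip_conj ip_ge0 _] _] := HV.
have [T_lin /(sqnorm_bounded_of_hnorm ip_ge0) [KT KT_ge0 T_bnd]] := HT.
have [[Ts_lin /(sqnorm_bounded_of_hnorm ip_ge0) [KTs KTs_ge0 Ts_bnd]] T_adj]
  := HTstar.
have [[[A_lin _] A_ge0] AA] := HabsT.
have [[[B_lin _] B_ge0] BB] := HabsTstar.
have A_sa := positive_selfadjoint ip_lin ip_conj A_lin A_ge0.
rewrite !(hnormE ip_ge0) normc_def sqr_normc -rmorphM -rmorphB lecR.
apply: le_trans (sqrt_sqmod_covariance_le ip_lin ip_conj ip_ge0 A_sa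
  (A_ge0 x) (B_ge0 x) (sqnorm_eq1_of_hnorm ip_ge0 hx)) _.
rewrite lerB //; exact: (mixed_schwarz ip_lin ip_conj ip_ge0 T_lin Ts_lin A_lin
  B_lin T_adj A_ge0 B_ge0 AA BB KT_ge0 KTs_ge0 T_bnd Ts_bnd).
Qed.
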